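(* Let $f:\mathbb{R}^n_{>0}\to\mathbb{R}^n_{>0}$ be order-preserving, homogeneous, and multiplicatively convex. If $\mathcal{G}(f)$ has a unique final class $C$, then $f$ is strongly nonnegative if and only if $r(f^{[n]\setminus C}_0)<r(f^C_0)$.
   Context: $[n]=\{1,\dots,n\}$; entrywise order. Order-preserving: $x\le y\Rightarrow f(x)\le f(y)$; homogeneous: $f(tx)=tf(x)$ for $t>0$; multiplicatively convex: each entry of $\log\circ f\circ\exp$ is convex. $f$ extends continuously to an order-preserving homogeneous map on $\mathbb{R}^n_{\ge0}$, again denoted $f$. $P^J_0(x)_j=x_j$ for $j\in J$, $0$ otherwise; $f^J_0=P^J_0fP^J_0$; $r(g)=\inf_{x\in\mathbb{R}^n_{>0}}\max_ig(x)_i/x_i$. $\mathcal{G}(f)$ is the directed graph on $[n]$ with an arc $i\to j$ when $\lim_{t\to\infty}f(\exp(te_{\{j\}}))_i=\infty$. A final class is a strongly connected component with no arcs leaving it. $f$ is strongly nonnegative if $r(f^C_0)=r(f)$ for every final class $C$ and $r(f^C_0)<r(f)$ for every non-final strongly connected component $C$. *)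

From HB Require Import structures.
From mathcomp Require Import all_boot all_order all_algebra.
From mathcomp Require Import all_classical all_reals all_analysis.
Set Implicit Arguments. Unset Strict Implicit. Unset Printing Implicit Defensive.
Import Order.TTheory GRing.Theory Num.Theory.
Local Open Scope classical_set_scope.
Local Open Scope ring_scope.

Section Defs.
Variables (R : realType) (n : nat).
Notation vec := ('I_n -> R).

Definition posv (x : vec) : Prop := forall i, 0 < x i.
Definition nnegv (x : vec) : Prop := forall i, 0 <= x i.

Definition maps_pos (f : vec -> vec) : Prop := forall x, posv x -> posv (f x).

Definition order_preserving (f : vec -> vec) : Prop :=
  forall x y, posv x -> posv y -> (forall i, x i <= y i) -> forall i, f x i <= f y i.

Definition homogeneous (f : vec -> vec) : Prop :=
  forall (t : R) x, 0 < t -> posv x -> f (fun i => t * x i) = (fun i => t * f x i).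

Definition mult_convex (f : vec -> vec) : Prop :=
  forall i (x y : vec) (l : R), 0 <= l -> l <= 1 ->
    ln (f (fun k => expR (l * x k + (1 - l) * y k)) i)
    <= l * ln (f (fun k => expR (x k)) i) + (1 - l) * ln (f (fun k => expR (y k)) i).

(* The continuous extension of an order-preserving homogeneous f to R^n_{>=0}:
   fbar x = lim_{e -> 0+} f (x + e 1) = inf_{e > 0} f (x + e 1)  (entrywise). *)
Definition fbar (f : vec -> vec) (x : vec) : vec :=
  fun i => inf [set f (fun k => x k + e) i | e in [set e : R | 0 < e]].

Definition P0 (J : {set 'I_n}) (x : vec) : vec :=
  fun j => if j \in J then x j else 0.

Definition fJ0 (f : vec -> vec) (J : {set 'I_n}) : vec -> vec :=
  fun x => P0 J (fbar f (P0 J x)).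

Definition cw_radius (g : vec -> vec) : R :=
  inf [set \big[Order.max/0]_(i < n) (g x i / x i) | x in [set x | posv x]].

Definition arc (f : vec -> vec) (i j : 'I_n) : Prop :=
  forall M : R, exists T : R, forall t : R, T <= t ->
    M < f (fun k => expR (t * (k == j)%:R)) i.

Inductive reach (f : vec -> vec) : 'I_n -> 'I_n -> Prop :=
  | reach_refl i : reach f i i
  | reach_step i j k : arc f i j -> reach f j k -> reach f i k.

Definition scc (f : vec -> vec) (C : {set 'I_n}) : Prop :=
  (exists i, i \in C) /\
  (forall i j, i \in C -> j \in C -> reach f i j) /\
  (forall i j, i \in C -> reach f i j -> reach f j i -> j \in C).

Definition final_class (f : vec -> vec) (C : {set 'I_n}) : Prop :=
  scc f C /\ (forall i j, i \in C -> arc f i j -> j \in C).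

Definition strongly_nonnegative (f : vec -> vec) : Prop :=
  (forall C, final_class f C -> cw_radius (fJ0 f C) = cw_radius f) /\
  (forall C, scc f C -> ~ final_class f C -> cw_radius (fJ0 f C) < cw_radius f).

End Defs.

From Pilot Require Import Defs.
From HB Require Import structures.
From mathcomp Require Import all_boot all_order all_algebra.
From mathcomp Require Import all_classical all_reals all_analysis.
From mathcomp Require Import ring lra.
Import Order.TTheory GRing.Theory Num.Theory.
Set Implicit Arguments. Unset Strict Implicit. Unset Printing Implicit Defensive.
Local Open Scope ring_scope.

Section InfImage.
Variables (R : realType) (T : Type) (S : set T) (F : T -> R).

Lemma ge0_inf_image_le x :
  S x -> (forall y, S y -> 0 <= F y) -> inf [set F y | y in S] <= F x.
Proof.
move=> Sx F_ge0; apply: ge_inf; last by exists x.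
by exists 0 => _ [y Sy <-]; exact: F_ge0.
Qed.

Lemma le_inf_image b :
  (exists x, S x) -> (forall x, S x -> b <= F x) -> b <= inf [set F x | x in S].
Proof.
move=> [x Sx] F_ge; apply: lb_le_inf; first by exists (F x), x.
by move=> _ [y Sy <-]; exact: F_ge.
Qed.

Lemma inf_image_lt b :
  (exists x, S x) -> inf [set F x | x in S] < b -> exists2 x, S x & F x < b.
Proof.
move=> [x Sx] /inf_lt[|_ [y Sy <-] Fy_lt]; first by exists (F x), x.
by exists y.
Qed.

End InfImage.

Section ConvexBounded.
Variables (R : realType) (g : R -> R).
Hypothesis g_convex : forall a b l, 0 <= l -> l <= 1 ->
  g (l * a + (1 - l) * b) <= l * g a + (1 - l) * g b.

Lemma convex_secant_le a b t : a < b -> b < t ->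
  (g b - g a) * (t - b) <= (g t - g b) * (b - a).
Proof.
move=> ab bt; have ta : 0 < t - a by lra.
set l := (t - b) / (t - a).
have l_ge0 : 0 <= l by rewrite divr_ge0 //; lra.
have l_le1 : l <= 1 by rewrite ler_pdivrMr // mul1r; lra.
have := g_convex a t l_ge0 l_le1.
have -> : l * a + (1 - l) * t = b by rewrite /l; field; rewrite gt_eqF.
have tb : t - b = l * (t - a) by rewrite /l divfK // gt_eqF.
have ba : b - a = (1 - l) * (t - a) by lra.
rewrite tb ba => /(ler_wpM2r (ltW ta)); lra.
Qed.

Lemma convex_nondecreasing_bounded_const B :
  {homo g : a b / a <= b} -> (forall s, g s <= B) -> forall a b, g a = g b.
Proof.
move=> g_mono g_le_B.
suff g_flat : forall a b, a < b -> g b <= g a.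
  move=> a b; case: (ltgtP a b) => [ab|ba|-> //]; apply/le_anti/andP.
    by rewrite (g_flat _ _ ab) g_mono // ltW.
  by rewrite (g_flat _ _ ba) g_mono // ltW.
move=> a b ab; rewrite leNgt; apply/negP => gab.
(* the secant through (a, g a) and (b, g b) exceeds B at t *)
set t := b + (b - a) * (B - g b + 1) / (g b - g a).
have gap : 0 < B - g b + 1 by have := g_le_B b; lra.
have tb : t - b = (b - a) * (B - g b + 1) / (g b - g a) by rewrite /t; ring.
have bt : b < t by rewrite -subr_gt0 tb divr_gt0 ?mulr_gt0 //; lra.
have secant : (g b - g a) * (t - b) = (b - a) * (B - g b + 1).
  by rewrite tb; field; rewrite gt_eqF // subr_gt0.
have := convex_secant_le ab bt; rewrite secant.
have := g_le_B t; nra.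
Qed.

End ConvexBounded.

Section Radius.
Variables (R : realType) (n : nat).
Implicit Types (g h : ('I_n -> R) -> ('I_n -> R)) (x : 'I_n -> R) (b : R).

Lemma posv1 : posv (fun _ : 'I_n => 1 : R).
Proof. by move=> i. Qed.

Lemma cw_radius_ge0 g : 0 <= cw_radius g.
Proof.
apply: le_inf_image => [|x _]; first by exists (fun _ => 1); exact: posv1.
by rewrite bigmax_idl le_max lexx.
Qed.

Lemma cw_radius_le_ratio g x : posv x ->
  cw_radius g <= \big[Order.max/0]_(i < n) (g x i / x i).
Proof.
move=> x_pos; apply: (ge0_inf_image_le (S := [set x | posv x])) => // y _.
by rewrite bigmax_idl le_max lexx.
Qed.

Lemma cw_radius_le g x b : posv x -> 0 <= b ->
  (forall i, g x i <= b * x i) -> cw_radius g <= b.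
Proof.
move=> x_pos b_ge0 gx_le; apply: le_trans (cw_radius_le_ratio g x_pos) _.
by apply/bigmax_leP; split=> // i _; rewrite ler_pdivrMr.
Qed.

Lemma cw_radius_lt_subeigen g b : cw_radius g < b ->
  exists2 x, posv x & forall i, g x i <= b * x i.
Proof.
move=> /inf_image_lt[|x x_pos /bigmax_ltP[_ gx_lt]].
  by exists (fun _ => 1); exact: posv1.
by exists x => // i; rewrite -ler_pdivrMr // ltW ?gx_lt.
Qed.

Lemma cw_radius_ge g b : (forall x, posv x -> exists i, b * x i <= g x i) ->
  b <= cw_radius g.
Proof.
move=> gx_ge; apply: le_inf_image => [|x x_pos].
  by exists (fun _ => 1); exact: posv1.
have [i le_gxi] := gx_ge x x_pos.
by apply: le_trans (le_bigmax _ _ i); rewrite ler_pdivlMr.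
Qed.

Lemma le_cw_radius g h : (forall x, posv x -> forall i, g x i <= h x i) ->
  cw_radius g <= cw_radius h.
Proof.
move=> le_gh; apply: le_inf_image => [|x x_pos].
  by exists (fun _ => 1); exact: posv1.
apply: le_trans (cw_radius_le_ratio g x_pos) _; apply: le_bigmax2 => i _.
by rewrite ler_pM2r ?invr_gt0 ?le_gh.
Qed.

End Radius.

Arguments posv1 {R n}.

Section Graph.
Variables (R : realType) (n : nat) (f : ('I_n -> R) -> ('I_n -> R)).
Implicit Types (i j k : 'I_n) (J : {set 'I_n}).

Lemma reach_trans i j k : reach f i j -> reach f j k -> reach f i k.
Proof. by elim=> // a b c ab _ IH /IH; exact: reach_step. Qed.

Lemma reach_arc i j k : reach f i j -> Defs.arc f j k -> reach f i k.
Proof. by move=> ij jk; apply: reach_trans ij (reach_step jk (reach_refl _ _)). Qed.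

Definition scc_of i := [set j | `[< reach f i j /\ reach f j i >]].

Lemma scc_ofP i j : reflect (reach f i j /\ reach f j i) (j \in scc_of i).
Proof. by rewrite inE; exact: asboolP. Qed.

Lemma scc_of_refl i : i \in scc_of i.
Proof. by apply/scc_ofP; split; exact: reach_refl. Qed.

Lemma scc_of_scc i : scc f (scc_of i).
Proof.
split; first by exists i; exact: scc_of_refl.
split=> [j k /scc_ofP[_ ji] /scc_ofP[ik _]|j k /scc_ofP[ij ji] jk kj].
  exact: reach_trans ji ik.
by apply/scc_ofP; split; [exact: reach_trans ij jk | exact: reach_trans kj ji].
Qed.

Lemma scc_eq (C D : {set 'I_n}) i : scc f C -> scc f D -> i \in C -> i \in D -> C = D.
Proof.
move=> [_ [C_conn C_max]] [_ [D_conn D_max]] iC iD.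
apply/setP => k; apply/idP/idP => kX.
  by apply: (D_max i) => //; [exact: C_conn | exact: C_conn].
by apply: (C_max i) => //; [exact: D_conn | exact: D_conn].
Qed.

Definition reach_in J i := [set j in J | `[< reach f i j >]].

Lemma reach_inP J i j : reflect (j \in J /\ reach f i j) (j \in reach_in J i).
Proof. by rewrite inE; apply: (iffP andP) => -[-> /asboolP]. Qed.

Lemma not_arc_reach_in J i a b :
  a \in reach_in J i -> b \in J :\: reach_in J i -> ~ Defs.arc f a b.
Proof.
move=> /reach_inP[_ ia]; rewrite inE => /andP[/reach_inP b_unreached bJ] ab.
by apply: b_unreached; split=> //; exact: reach_arc ia ab.
Qed.

(* a vertex whose reachable part of J is smallest can be reached back from all of it *)
Lemma exists_reach_in_sub_scc J i0 : i0 \in J ->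
  exists2 i, i \in J & reach_in J i \subset scc_of i.
Proof.
move=> i0J; have [i iJ i_min] := arg_minnP (fun i => #|reach_in J i|) i0J.
exists i => //; apply/fintype.subsetP => j /reach_inP[jJ ij]; apply/scc_ofP.
split=> //.
have sub_ji : reach_in J j \subset reach_in J i.
  apply/fintype.subsetP => k /reach_inP[kJ jk]; apply/reach_inP.
  by split=> //; exact: reach_trans ij jk.
have /eqP eq_ji : reach_in J j == reach_in J i by rewrite eqEcard sub_ji i_min.
have /reach_inP[] // : i \in reach_in J j.
by rewrite eq_ji; apply/reach_inP; split=> //; exact: reach_refl.
Qed.

End Graph.

Section Extension.
Variables (R : realType) (n : nat) (f : ('I_n -> R) -> ('I_n -> R)).
Hypotheses (f_pos : maps_pos f) (f_op : order_preserving f)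
  (f_hom : homogeneous f) (f_mc : mult_convex f).
Implicit Types (x y u w z : 'I_n -> R) (J K L : {set 'I_n}).

Local Notation rad J := (cw_radius (fJ0 f J)).

Lemma posv_nnegv x : posv x -> nnegv x.
Proof. by move=> x_pos k; exact/ltW. Qed.

Lemma nnegv_P0 J x : nnegv x -> nnegv (P0 J x).
Proof. by move=> x_ge0 k; rewrite /P0; case: ifP. Qed.

Lemma posv_shift x e : nnegv x -> 0 < e -> posv (fun k => x k + e).
Proof. by move=> x_ge0 e_gt0 k; have := x_ge0 k; lra. Qed.

Lemma fbar_le_shift x i e : nnegv x -> 0 < e ->
  fbar f x i <= f (fun k => x k + e) i.
Proof.
move=> x_ge0 e_gt0; apply: (ge0_inf_image_le (S := [set e : R | 0 < e])) => //.
by move=> e' e'_gt0; apply/ltW/f_pos/posv_shift.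
Qed.

Lemma fbar_glb x i b : (forall e, 0 < e -> b <= f (fun k => x k + e) i) ->
  b <= fbar f x i.
Proof. by apply: le_inf_image; exists 1; rewrite /= ltr01. Qed.

Lemma fbar_ge0 x i : nnegv x -> 0 <= fbar f x i.
Proof. by move=> x_ge0; apply: fbar_glb => e e_gt0; apply/ltW/f_pos/posv_shift. Qed.

Lemma fbar_lt_shift x i b : fbar f x i < b ->
  exists2 e, 0 < e & f (fun k => x k + e) i < b.
Proof. by apply: inf_image_lt; exists 1; rewrite /= ltr01. Qed.

Lemma le_fbar x y i : nnegv x -> (forall k, x k <= y k) ->
  fbar f x i <= fbar f y i.
Proof.
move=> x_ge0 le_xy.
have y_ge0 : nnegv y by move=> k; exact: le_trans (x_ge0 k) (le_xy k).
apply: fbar_glb => e e_gt0; apply: le_trans (fbar_le_shift i x_ge0 e_gt0) _.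
by apply: f_op; try exact: posv_shift; move=> k; rewrite lerD2r.
Qed.

Lemma eq_fbar x y i :
  (forall e, 0 < e -> f (fun k => x k + e) i = f (fun k => y k + e) i) ->
  fbar f x i = fbar f y i.
Proof.
move=> eq_xy; rewrite /fbar; congr inf.
by apply/seteqP; split=> _ [e e_gt0 <-]; exists e; rewrite ?eq_xy.
Qed.

Lemma fbar_posv x i : posv x -> fbar f x i = f x i.
Proof.
move=> x_pos; apply/le_anti/andP; split; last first.
  apply: fbar_glb => e e_gt0; apply: f_op => // [|k]; last by rewrite lerDl ltW.
  exact/posv_shift/e_gt0/posv_nnegv.
(* x + e <= (1 + e / min x) x, so homogeneity squeezes f (x + e) down to f x *)
apply/ler_addgt0Pr => eps eps_gt0.
set m := \big[Order.min/1]_k x k.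
have m_gt0 : 0 < m by apply: lt_bigmin => // k _.
have fx_gt0 : 0 < f x i by exact: f_pos.
set d := eps / f x i.
have d_gt0 : 0 < d by rewrite divr_gt0.
apply: le_trans (fbar_le_shift i (posv_nnegv x_pos) (mulr_gt0 d_gt0 m_gt0)) _.
have -> : f x i + eps = (1 + d) * f x i by rewrite /d mulrDl mul1r divfK ?gt_eqF.
have <- : f (fun k => (1 + d) * x k) i = (1 + d) * f x i by rewrite f_hom //; lra.
apply: f_op => [|k|k]; first exact/posv_shift/mulr_gt0/m_gt0/d_gt0/posv_nnegv.
  by apply: mulr_gt0 (x_pos k); lra.
by rewrite mulrDl mul1r lerD2l ler_pM2l // bigmin_le.
Qed.

Lemma fbar_lt_shift_uniform L x c : nnegv x ->
  (forall i, i \in L -> fbar f x i < c i) ->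
  exists2 d, 0 < d & forall i, i \in L -> f (fun k => x k + d) i < c i.
Proof.
move=> x_ge0 lt_c.
have /boolp.choice[e e_spec] : forall i, exists e, 0 < e /\
    (i \in L -> f (fun k => x k + e) i < c i).
  move=> i; have [iL|_] := boolP (i \in L); last by exists 1.
  by have [e ? ?] := fbar_lt_shift (lt_c i iL); exists e.
exists (\big[Order.min/1]_k e k) => [|i iL].
  by apply: lt_bigmin => // k _; case: (e_spec k).
have [e_gt0 /(_ iL) lt_ci] := e_spec i; apply: le_lt_trans lt_ci.
apply: f_op => [||k]; try apply: posv_shift => //.
  by apply: lt_bigmin => // k _; case: (e_spec k).
by rewrite lerD2l bigmin_le.
Qed.

Lemma fbar_le_scale w x t d i : nnegv w -> nnegv x -> 0 < t -> 0 < d ->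
  (forall k, w k <= t * (x k + d / 2)) -> fbar f w i <= t * f (fun k => x k + d) i.
Proof.
move=> w_ge0 x_ge0 t_gt0 d_gt0 le_w.
have td_gt0 : 0 < t * (d / 2) by rewrite mulr_gt0 // divr_gt0.
apply: le_trans (fbar_le_shift i w_ge0 td_gt0) _.
have <- : f (fun k => t * (x k + d)) i = t * f (fun k => x k + d) i.
  by rewrite f_hom //; exact: posv_shift.
apply: f_op => [|k|k]; first exact: posv_shift.
  by rewrite mulr_gt0 //; have := x_ge0 k; lra.
by have := le_w k; lra.
Qed.

Lemma fJ0_ge0 J x i : posv x -> 0 <= fJ0 f J x i.
Proof.
move=> x_pos; rewrite /fJ0 {1}/P0; case: ifP => // _.
exact/fbar_ge0/nnegv_P0/posv_nnegv.
Qed.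

Lemma P0_setT x : P0 [set: 'I_n] x = x.
Proof. by apply: funext => k; rewrite /P0 finset.in_setT. Qed.

Lemma cw_radius_fJ0_setT : rad [set: 'I_n] = cw_radius f.
Proof.
have fJ0_setT x i : posv x -> fJ0 f [set: 'I_n] x i = f x i.
  by move=> x_pos; rewrite /fJ0 !P0_setT fbar_posv.
by apply/le_anti/andP; split; apply: le_cw_radius => x x_pos i; rewrite fJ0_setT.
Qed.

Lemma cw_radius_fJ0_subset J K : J \subset K -> rad J <= rad K.
Proof.
move=> /fintype.subsetP JK; apply: le_cw_radius => x x_pos i.
rewrite /fJ0 {1}/P0; case: ifP => [iJ|_]; last exact: fJ0_ge0.
rewrite /P0 JK //; apply: le_fbar => [|k]; first exact/nnegv_P0/posv_nnegv.
by case: ifP => [/JK -> //|_]; case: ifP => // _; exact/ltW.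
Qed.

Lemma cw_radius_fJ0_set0 : rad finset.set0 <= 0.
Proof. by apply: (cw_radius_le posv1) => // i; rewrite /fJ0 /P0 finset.in_set0 mul0r. Qed.

Lemma cw_radius_gt0 (i0 : 'I_n) : 0 < cw_radius f.
Proof.
(* x >= (min x) 1 gives f x >= (min x) f 1 at a coordinate where x is minimal *)
set c := \big[Order.min/1]_k f (fun _ => 1) k.
have c_gt0 : 0 < c by apply: lt_bigmin => // k _; exact/f_pos/posv1.
apply: lt_le_trans c_gt0 _; apply: cw_radius_ge => x x_pos.
have [k _ x_min] := @arg_minP _ _ _ i0 xpredT x isT; exists k.
apply: le_trans (_ : x k * f (fun _ => 1) k <= _).
  by rewrite [c * _]mulrC ler_pM2l // bigmin_le.
have <- : f (fun _ => x k * 1) k = x k * f (fun _ => 1) k by rewrite f_hom.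
by apply: f_op => // [l|l]; rewrite mulr1 ?x_min.
Qed.


Lemma posv_update u j a : posv u -> 0 < a -> posv [eta u with j |-> a].
Proof. by move=> u_pos a_gt0 k /=; case: ifP. Qed.

Lemma ln_f_update_convex i j u a b l : posv u -> 0 <= l -> l <= 1 ->
  ln (f [eta u with j |-> expR (l * a + (1 - l) * b)] i)
  <= l * ln (f [eta u with j |-> expR a] i) + (1 - l) * ln (f [eta u with j |-> expR b] i).
Proof.
move=> u_pos l_ge0 l_le1; pose lnu c k := if k == j then c else ln (u k).
have expR_lnu c : (fun k => expR (lnu c k)) = [eta u with j |-> expR c].
  by apply: funext => k /=; rewrite /lnu; case: ifP => // _; rewrite lnK // posrE.
have := f_mc i (lnu a) (lnu b) l_ge0 l_le1; rewrite !expR_lnu.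
have -> // : (fun k => expR (l * lnu a k + (1 - l) * lnu b k))
             = [eta u with j |-> expR (l * a + (1 - l) * b)].
apply: funext => k /=; rewrite /lnu; case: ifP => // _.
by rewrite -mulrDl addrC subrK mul1r lnK // posrE.
Qed.

Lemma not_arc_bounded i j : ~ Defs.arc f i j ->
  exists M, forall s, f (fun k => expR (s * (k == j)%:R)) i <= M.
Proof.
move=> /existsNP[M /forallNP no_T]; exists M => s.
have /existsNP[t /not_implyP[s_le_t /negP]] := no_T s.
rewrite -leNgt; apply: le_trans; apply: f_op => [k|k|k]; rewrite ?expR_gt0 //.
by rewrite ler_expR ler_wpM2r ?ler0n.
Qed.

Lemma f_update_bounded_not_arc i j u : ~ Defs.arc f i j -> posv u ->
  exists2 B, 0 < B & forall a, 0 < a -> f [eta u with j |-> a] i <= B.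
Proof.
move=> no_arc u_pos; have [M f_le_M] := not_arc_bounded no_arc.
set c := \big[Order.max/1]_k u k.
have c_ge1 : 1 <= c by exact: bigmax_ge_id.
have c_gt0 : 0 < c by lra.
have M_gt0 : 0 < M by apply: lt_le_trans (f_le_M 0); apply: f_pos => k; rewrite expR_gt0.
exists (c * M) => [|a a_gt0]; first exact: mulr_gt0.
apply: le_trans (_ : f (fun k => c * expR (ln a * (k == j)%:R)) i <= _).
  apply: f_op => [|k|k /=]; first exact: posv_update.
    by rewrite mulr_gt0 ?expR_gt0.
  case: ifP => _ /=; rewrite ?mulr1 ?mulr0 ?expR0 ?mulr1; last exact: le_bigmax.
  by rewrite lnK ?posrE // ler_peMl //; exact: ltW.
rewrite f_hom //=; last by move=> k; exact: expR_gt0.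
by rewrite ler_pM2l.
Qed.

Lemma f_update_not_arc i j u v : ~ Defs.arc f i j -> posv u -> 0 < v ->
  f [eta u with j |-> v] i = f u i.
Proof.
move=> no_arc u_pos v_gt0.
have fupd_gt0 a : 0 < a -> 0 < f [eta u with j |-> a] i.
  by move=> a_gt0; exact/f_pos/posv_update.
(* along coordinate j, log f_i is convex, nondecreasing and bounded, hence constant *)
pose g s := ln (f [eta u with j |-> expR s] i).
have g_convex a b l : 0 <= l -> l <= 1 ->
    g (l * a + (1 - l) * b) <= l * g a + (1 - l) * g b.
  exact: ln_f_update_convex.
have g_mono : {homo g : a b / a <= b}.
  move=> a b le_ab; rewrite /g ler_ln ?posrE ?fupd_gt0 ?expR_gt0 //.
  apply: f_op; try exact/posv_update/expR_gt0.
  by move=> k /=; case: ifP; rewrite ?ler_expR.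
have [B B_gt0 f_le_B] := f_update_bounded_not_arc no_arc u_pos.
have g_le s : g s <= ln B by rewrite /g ler_ln ?posrE ?fupd_gt0 ?expR_gt0 // f_le_B ?expR_gt0.
have := convex_nondecreasing_bounded_const g_convex g_mono g_le (ln v) (ln (u j)).
move/(congr1 expR); rewrite /g !lnK ?posrE ?fupd_gt0 // => ->.
by congr (f _ i); apply: funext => k /=; case: ifP => // /eqP ->.
Qed.

Lemma f_eq_off_not_arc i (L : {set 'I_n}) u w : (forall j, j \in L -> ~ Defs.arc f i j) ->
  posv u -> posv w -> (forall k, k \notin L -> u k = w k) -> f u i = f w i.
Proof.
move=> no_arc u_pos w_pos eq_uw.
suff eq_off_seq (s : seq 'I_n) v : {subset s <= L} -> posv v ->
    (forall k, k \notin s -> v k = w k) -> f v i = f w i.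
  by apply: (eq_off_seq (enum L)) => // k; rewrite mem_enum // => /eq_uw.
elim: s v => [|j s IH] v sL v_pos eq_vw.
  by congr (f _ i); apply: funext => k; exact: eq_vw.
have no_arc_j : ~ Defs.arc f i j by apply/no_arc/sL; rewrite mem_head.
rewrite -(f_update_not_arc no_arc_j v_pos (w_pos j)).
apply: IH => [k ks|k /=|k ks /=]; first by apply: sL; rewrite inE ks orbT.
  by case: ifP.
by case: ifP => [/eqP -> //|kj]; apply: eq_vw; rewrite inE negb_or ks kj.
Qed.


Lemma fJ0_setU_not_arc K L z i : i \in K -> (forall j, j \in L -> ~ Defs.arc f i j) ->
  nnegv z -> fJ0 f (K :|: L) z i = fJ0 f K z i.
Proof.
move=> iK no_arc z_ge0; rewrite /fJ0 {1 3}/P0 finset.in_setU iK.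
apply: eq_fbar => e e_gt0; apply: (f_eq_off_not_arc no_arc).
- exact/posv_shift/e_gt0/nnegv_P0.
- exact/posv_shift/e_gt0/nnegv_P0.
by move=> k kL; rewrite /P0 finset.in_setU (negbTE kL) orbF.
Qed.

Lemma cw_radius_fJ0_setU K L : [disjoint K & L] ->
  (forall i j, i \in K -> j \in L -> ~ Defs.arc f i j) ->
  rad (K :|: L) <= Num.max (rad K) (rad L).
Proof.
move=> KL no_arc; apply/ler_addgt0Pr => e e_gt0.
set m := Num.max (rad K) (rad L).
have [rK_le rL_le] : rad K <= m /\ rad L <= m by rewrite !le_max !lexx orbT.
have m_ge0 : 0 <= m := le_trans (cw_radius_ge0 _) rK_le.
have [y y_pos fKy_le] : exists2 y, posv y & forall i, fJ0 f K y i <= (m + e) * y i.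
  by apply: cw_radius_lt_subeigen; lra.
have [x x_pos fLx_le] : exists2 x, posv x & forall i, fJ0 f L x i <= (m + e / 2) * x i.
  by apply: cw_radius_lt_subeigen; lra.
have [d d_gt0 fLx_lt] : exists2 d, 0 < d &
    forall i, i \in L -> f (fun k => P0 L x k + d) i < (m + e) * x i.
  apply: (fbar_lt_shift_uniform (nnegv_P0 L (posv_nnegv x_pos))) => i iL.
  have := fLx_le i; rewrite /fJ0 {1}/P0 iL => /le_lt_trans; apply.
  by rewrite ltr_pM2r //; lra.
(* scale the L-part of the witness up until the K-part becomes negligible *)
set Y := \big[Order.max/1]_k y k.
have Y_gt0 : 0 < Y by apply: lt_le_trans (bigmax_ge_id _ _ _ _).
set t := 2 * Y / d.
have t_gt0 : 0 < t by rewrite divr_gt0 ?mulr_gt0.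
have y_le k : y k <= t * (d / 2).
  have -> : t * (d / 2) = Y by rewrite /t; field; rewrite gt_eqF.
  exact: le_bigmax.
pose z k := if k \in K then y k else if k \in L then t * x k else 1.
have z_pos : posv z.
  move=> k; rewrite /z; case: ifP => _; first exact: y_pos.
  by case: ifP => _; [exact: mulr_gt0 | exact: ltr01].
apply: (cw_radius_le z_pos) => [|i]; first lra.
have [iK|iK] := boolP (i \in K).
  rewrite (fJ0_setU_not_arc iK (no_arc i ^~ iK) (posv_nnegv z_pos)).
  have eq_zy : P0 K z = P0 K y by apply: funext => k; rewrite /P0 /z; case: (k \in K).
  by rewrite /fJ0 eq_zy /z iK; exact: fKy_le.
have [iL|iL] := boolP (i \in L); last first.
  by rewrite /fJ0 {1}/P0 finset.in_setU (negbTE iK) (negbTE iL) mulr_ge0 ?ltW //; lra.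
have [z_ge0 x_ge0] := (posv_nnegv z_pos, posv_nnegv x_pos).
rewrite /fJ0 {1}/P0 finset.in_setU iL orbT.
apply: le_trans (fbar_le_scale i (nnegv_P0 _ z_ge0) (nnegv_P0 L x_ge0) t_gt0 d_gt0 _) _.
  move=> k; rewrite /P0 /z finset.in_setU.
  have [kK|kK] := boolP (k \in K); first by rewrite (disjointFr KL kK) add0r y_le.
  have [kL|kL] := boolP (k \in L); last by rewrite mulr_ge0 ?ltW //; lra.
  by rewrite ler_pM2l //; lra.
by rewrite /z (negbTE iK) iL mulrCA ler_pM2l // ltW ?fLx_lt.
Qed.

Lemma cw_radius_fJ0_lt_of_scc J b : 0 < b ->
  (forall i, i \in J -> rad (scc_of f i) < b) -> rad J < b.
Proof.
move=> b_gt0; have [N J_lt] := ubnP #|J|; elim: N => // N IH in J J_lt *.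
move=> scc_lt; have [->|[i0 i0J]] := set_0Vmem J.
  exact: le_lt_trans cw_radius_fJ0_set0 b_gt0.
have [i iJ K_sub] := exists_reach_in_sub_scc f i0J.
set K := reach_in f J i.
have KJ : K \subset J by apply/fintype.subsetP => k /reach_inP[].
have iK : i \in K by apply/reach_inP; split=> //; exact: reach_refl.
rewrite -(finset.setID J K) (finset.setIidPr KJ).
apply: le_lt_trans (cw_radius_fJ0_setU _ _) _.
- rewrite finset.disjoints_subset; apply/fintype.subsetP => k kK.
  by rewrite finset.in_setC finset.in_setD kK.
- by move=> a c aK cJK; exact: not_arc_reach_in aK cJK.
rewrite gt_max (le_lt_trans (cw_radius_fJ0_subset K_sub) (scc_lt i iJ)) /=.
apply: IH => [|j /finset.setDP[jJ _]]; last exact: scc_lt j jJ.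
have JK_proper : J :\: K \proper J.
  by apply/properP; split; [exact: finset.subsetDl | exists i; rewrite // finset.in_setD iK].
exact: leq_trans (proper_card JK_proper) J_lt.
Qed.

Lemma cw_radius_le_max_final C : final_class f C ->
  cw_radius f <= Num.max (rad C) (rad (~: C)).
Proof.
move=> [_ C_closed]; rewrite -cw_radius_fJ0_setT -(finset.setUCr C).
apply: cw_radius_fJ0_setU => [|i j iC]; first by rewrite finset.disjoints_subset finset.setCK.
by rewrite finset.in_setC => /negP jC /(C_closed _ _ iC).
Qed.

End Extension.

Theorem lemma4p8 (R : realType) (n : nat) (f : ('I_n -> R) -> ('I_n -> R))
  (f_pos : maps_pos f) (f_op : order_preserving f) (f_hom : homogeneous f)
  (f_mc : mult_convex f) (C : {set 'I_n})
  (hC : final_class f C) (huniq : forall D, final_class f D -> D = C) :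
  strongly_nonnegative f <-> cw_radius (fJ0 f (~: C)) < cw_radius (fJ0 f C).
Proof.
have [[[c0 _] _] _] := hC.
have rad_subset := cw_radius_fJ0_subset f_pos f_op.
have rC_le : cw_radius (fJ0 f C) <= cw_radius f.
  by rewrite -(cw_radius_fJ0_setT f_pos f_op f_hom) rad_subset ?finset.subsetT.
split=> [[SN_final SN_nonfinal]|lt_rC].
  rewrite (SN_final C hC); apply: (cw_radius_fJ0_lt_of_scc f_pos f_op f_hom f_mc).
    exact: cw_radius_gt0 f_pos f_op f_hom c0.
  move=> i; rewrite finset.in_setC => /negP iC; apply: SN_nonfinal (scc_of_scc f i) _.
  by move=> /huniq E; apply: iC; rewrite -E scc_of_refl.
have rC : cw_radius (fJ0 f C) = cw_radius f.
  apply/le_anti; rewrite rC_le /=.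
  have := cw_radius_le_max_final f_pos f_op f_hom f_mc hC.
  by rewrite le_max => /orP[//|/le_trans->//]; exact: ltW.
split=> [D /huniq -> // | D D_scc D_nonfinal].
rewrite -rC; apply: le_lt_trans (rad_subset _ _ _) lt_rC.
apply/fintype.subsetP => d dD; rewrite finset.in_setC; apply/negP => dC.
by apply: D_nonfinal; rewrite (scc_eq D_scc hC.1 dD dC).
Qed.
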